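(* Let $\mathbf A,\mathbf B\in\mathbb C^{n\times n}$, $k=\operatorname{Ind}\mathbf A$, $r=\operatorname{rank}\mathbf A^{k}$, and for $l\ge 0$ let $\check{\mathbf B}^{(l)}=\mathbf B\mathbf A^{l}=(\check b^{(l)}_{ij})$ with $i$-th row $\check{\mathbf b}^{(l)}_{i.}$ (so $\check{\mathbf B}^{(0)}=\mathbf B=(b_{ij})$). Let \[\mathbf X(t)=\mathbf B\mathbf A^{D}+\sum_{s=1}^{k}\frac{(-1)^{s-1}}{s!}\left(\mathbf B\mathbf A^{s-1}-\mathbf B\mathbf A^{s}\mathbf A^{D}\right)t^{s}\] (the partial solution of $\mathbf X'+\mathbf X\mathbf A=\mathbf B$). Writing $\Delta=\sum_{\alpha\in I_{r,n}}\left|(\mathbf A^{k+1})^{\alpha}_{\alpha}\right|$ and $N_{ij}(l)=\sum_{\alpha\in I_{r,n}\{j\}}\left|\left(\mathbf A^{k+1}_{j.}(\check{\mathbf b}^{(l)}_{i.})\right)^{\alpha}_{\alpha}\right|$, the entries of $\mathbf X(t)=(x_{ij})$ are, for all $i,j=1,\dots,n$, \[x_{ij}=\frac{N_{ij}(k)}{\Delta}+\sum_{s=1}^{k}\frac{(-1)^{s-1}}{s!}\left(\check b^{(s-1)}_{ij}-\frac{N_{ij}(k+s)}{\Delta}\right)t^{s}.\]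
   Context: $\operatorname{Ind}\mathbf A$ is the smallest nonnegative $k$ with $\operatorname{rank}\mathbf A^{k+1}=\operatorname{rank}\mathbf A^{k}$; the Drazin inverse $\mathbf A^{D}$ is the unique $\mathbf X$ with $\mathbf A^{k+1}\mathbf X=\mathbf A^{k}$, $\mathbf X\mathbf A\mathbf X=\mathbf X$, $\mathbf A\mathbf X=\mathbf X\mathbf A$. $\mathbf M_{j.}(\mathbf c)$ denotes $\mathbf M$ with its $j$-th row replaced by the row vector $\mathbf c$. $I_{r,n}$ is the set of strictly increasing sequences of $r$ elements of $\{1,\dots,n\}$, $I_{r,n}\{j\}=\{\alpha\in I_{r,n}:j\in\alpha\}$, $\mathbf M^{\alpha}_{\alpha}$ is the principal submatrix indexed by $\alpha$, $|\cdot|$ is the determinant. *)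

(* matrices over C = R[i] (complex numbers over an arbitrary
   real field R : realType from MathComp-Analysis, i.e. a model of the reals). *)
From HB Require Import structures.
From mathcomp Require Import all_boot all_order all_algebra.
From mathcomp Require Import reals.
From mathcomp Require Import complex.
Set Implicit Arguments. Unset Strict Implicit. Unset Printing Implicit Defensive.
Import Order.TTheory GRing.Theory Num.Theory.
Local Open Scope ring_scope.

Section Defs.
Variable F : fieldType.
Variable n : nat.

Definition is_index (A : 'M[F]_n) (k : nat) : Prop :=
  \rank (A ^+ k.+1) = \rank (A ^+ k) /\
  (forall m : nat, (m < k)%N -> \rank (A ^+ m.+1) <> \rank (A ^+ m)).

Definition is_drazin (A X : 'M[F]_n) : Prop :=
  exists k, is_index A k /\
  A ^+ k.+1 *m X = A ^+ k /\ X *m A *m X = X /\ A *m X = X *m A.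

Definition row_repl (M : 'M[F]_n) (j : 'I_n) (c : 'rV[F]_n) : 'M[F]_n :=
  \matrix_(p, q) if p == j then c 0 q else M p q.

(* principal submatrix M^alpha_alpha, alpha given as a subset of indices
   (listed in increasing order) *)
Definition principal (M : 'M[F]_n) (S : {set 'I_n}) : 'M[F]_#|S| :=
  \matrix_(p, q) M (enum_val p) (enum_val q).

Definition sum_pminors (M : 'M[F]_n) (r : nat) : F :=
  \sum_(S : {set 'I_n} | #|S| == r) \det (principal M S).

Definition sum_pminors_j (M : 'M[F]_n) (r : nat) (j : 'I_n) : F :=
  \sum_(S : {set 'I_n} | (#|S| == r) && (j \in S)) \det (principal M S).
End Defs.

(** The matrix [M = A^(k+1)] has the group inverse [G = (A^D)^(k+1)], so
    [rank M^2 = rank M = r] and any full-rank factorization [M = X Y] has an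
    invertible core [W = Y X]. By Cauchy-Binet the sum of the principal
    [r]-minors of [X Y] is [det W]; replacing row [j] of [M] by [c = v Y] and
    keeping only the minors through [j] amounts, by the rank-one determinant
    formula, to [det W] times the [j]-th entry of [v W^-1 Y = c G]. For
    [c = row i (B A^(k+l))] this entry is [(B A^l A^D)_ij], which identifies
    every coefficient of the stated formula with the corresponding coefficient
    of [X(t)]. *)
From HB Require Import structures.
From mathcomp Require Import all_boot all_order all_algebra.
From mathcomp Require Import reals.
From mathcomp Require Import complex.
From mathcomp Require Import fingroup perm ring.
Set Implicit Arguments. Unset Strict Implicit. Unset Printing Implicit Defensive.
Import Order.TTheory GRing.Theory Num.Theory.
Local Open Scope ring_scope.

Section CauchyBinetExpansion.
Variable R : comPzRingType.

Definition cb_term r n (Y : 'M[R]_(r, n)) (X : 'M[R]_(n, r))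
    (f : {ffun 'I_r -> 'I_n}) : R :=
  (\prod_i Y i (f i)) * \det (\matrix_(i, j) X (f i) j).

Lemma det_mulmx_cb_terms r n (Y : 'M[R]_(r, n)) (X : 'M[R]_(n, r)) :
  \det (Y *m X) = \sum_(f : {ffun 'I_r -> 'I_n}) cb_term Y X f.
Proof.
rewrite /cb_term /determinant.
under eq_bigr => s _ do under eq_bigr => i _ do rewrite mxE.
transitivity (\sum_(s : 'S_r) \sum_(f : {ffun 'I_r -> 'I_n})
   (-1) ^+ s * \prod_i (Y i (f i) * X (f i) (s i))).
  apply: eq_bigr => s _; rewrite -big_distrr /=; congr (_ * _).
  by rewrite bigA_distr_bigA.
rewrite exchange_big; apply: eq_bigr => f _ /=.
rewrite big_distrr /=; apply: eq_bigr => s _.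
rewrite big_split /= mulrCA; congr (_ * (_ * _)).
by apply: eq_bigr => i _; rewrite mxE.
Qed.

Lemma cb_term_noninj r n (Y : 'M[R]_(r, n)) (X : 'M[R]_(n, r))
    (f : {ffun 'I_r -> 'I_n}) :
  ~~ injectiveb f -> cb_term Y X f = 0.
Proof.
case/injectivePn => i1 [i2 Di12 Ef12].
by rewrite /cb_term (determinant_alternate Di12) ?mulr0 // => j; rewrite !mxE Ef12.
Qed.

Lemma det_cast_mulmx m r (e : m = r) (W : 'M[R]_m) (P Q : 'M[R]_r) :
  (forall p q, W p q = (P *m Q) (cast_ord e p) (cast_ord e q)) ->
  \det W = \det P * \det Q.
Proof.
case: r / e P Q => P Q HW; rewrite -det_mulmx; congr (\det _).
by apply/matrixP => p q; rewrite HW !cast_ord_id.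
Qed.

End CauchyBinetExpansion.

Section SetEnumeration.
Variables n r : nat.

Definition set_enum_val (S : {set 'I_n}) (h : #|S| = r) (q : 'I_r) : 'I_n :=
  enum_val (cast_ord (esym h) q).

Lemma set_enum_val_inj (S : {set 'I_n}) (h : #|S| = r) :
  injective (set_enum_val h).
Proof. by move=> p q /enum_val_inj /cast_ord_inj. Qed.

Lemma set_enum_valP (S : {set 'I_n}) (h : #|S| = r) q : set_enum_val h q \in S.
Proof. exact: enum_valP. Qed.

Lemma set_enum_val_onto (S : {set 'I_n}) (h : #|S| = r) i :
  i \in S -> exists q, set_enum_val h q = i.
Proof.
move=> Si; exists (cast_ord h (enum_rank_in Si i)).
by rewrite /set_enum_val cast_ordK enum_rankK_in.
Qed.

Lemma sum_injective_onto_set (V : nmodType) (S : {set 'I_n}) (h : #|S| = r)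
    (Phi : {ffun 'I_r -> 'I_n} -> V) :
  \sum_(f : {ffun 'I_r -> 'I_n} | injectiveb f && (f @: [set: 'I_r] == S)) Phi f =
  \sum_(g : {ffun 'I_r -> 'I_r} | injectiveb g) Phi [ffun i => set_enum_val h (g i)].
Proof.
pose lift_fun (g : {ffun 'I_r -> 'I_r}) := [ffun i => set_enum_val h (g i)].
pose unlift_fun (f : {ffun 'I_r -> 'I_n}) :=
  [ffun i => odflt i [pick q | set_enum_val h q == f i]].
have unliftK g : unlift_fun (lift_fun g) = g.
  apply/ffunP => i; rewrite /unlift_fun /lift_fun !ffunE.
  case: pickP => [q /eqP|none]; first by move/set_enum_val_inj.
  by move: (none (g i)); rewrite eqxx.
rewrite (reindex_onto lift_fun unlift_fun) /=; last first.
  move=> f /andP[_ /eqP imf]; apply/ffunP => i.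
  rewrite /unlift_fun /lift_fun !ffunE; case: pickP => [q /eqP //|none].
  have: f i \in S by rewrite -imf imset_f ?inE.
  by case/(set_enum_val_onto h) => q Eq; move: (none q); rewrite Eq eqxx.
apply: eq_bigl => g; rewrite unliftK eqxx andbT.
apply/andP/idP => [[/injectiveP ig _]|/injectiveP ig].
  by apply/injectiveP => a b E; apply: ig; rewrite /lift_fun !ffunE E.
have ilg : injective (lift_fun g).
  by move=> a b; rewrite /lift_fun !ffunE => /set_enum_val_inj /ig.
split; first exact/injectiveP.
rewrite eqEcard card_imset // cardsT card_ord h leqnn andbT.
by apply/subsetP => x /imsetP[a _ ->]; rewrite /lift_fun ffunE set_enum_valP.
Qed.

End SetEnumeration.

Section CauchyBinet.
Variable F : fieldType.

Lemma det_principal_mulmx n r (X : 'M[F]_(n, r)) (Y : 'M[F]_(r, n)) (S : {set 'I_n})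
    (h : #|S| = r) :
  \det (principal (X *m Y) S) =
  \sum_(g : {ffun 'I_r -> 'I_r} | injectiveb g)
    cb_term Y X [ffun i => set_enum_val h (g i)].
Proof.
rewrite (det_cast_mulmx (P := \matrix_(i, j) X (set_enum_val h i) j)
                        (Q := \matrix_(i, j) Y i (set_enum_val h j)) (e := h)); last first.
  move=> p q; rewrite !mxE; apply: eq_bigr => l _.
  by rewrite !mxE /set_enum_val !cast_ordK.
rewrite mulrC -det_mulmx det_mulmx_cb_terms.
rewrite [LHS](bigID (fun g : {ffun 'I_r -> 'I_r} => injectiveb g)) /=.
rewrite [X in _ + X]big1 ?addr0; last by move=> g; apply: cb_term_noninj.
apply: eq_bigr => g _; rewrite /cb_term; congr (_ * _).
  by apply: eq_bigr => i _; rewrite !mxE ffunE.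
by congr (\det _); apply/matrixP => i j; rewrite !mxE ffunE.
Qed.

Lemma sum_pminors_mulmx n r (X : 'M[F]_(n, r)) (Y : 'M[F]_(r, n)) :
  sum_pminors (X *m Y) r = \det (Y *m X).
Proof.
rewrite /sum_pminors det_mulmx_cb_terms.
rewrite (bigID (fun f : {ffun 'I_r -> 'I_n} => injectiveb f)) /=.
rewrite [X in _ + X]big1 ?addr0; last by move=> f; apply: cb_term_noninj.
rewrite (partition_big (fun f : {ffun 'I_r -> 'I_n} => f @: [set: 'I_r])
          (fun S => #|S| == r)) /=; last first.
  by move=> f /injectiveP injf; rewrite card_imset // cardsT card_ord.
apply: eq_bigr => S /eqP h.
by rewrite (det_principal_mulmx X Y h) sum_injective_onto_set.
Qed.

End CauchyBinet.

Section RankOneUpdate.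
Variable R : comUnitRingType.

Lemma det_1_add_mulmx m (u : 'cV[R]_m) (b : 'rV[R]_m) :
  \det (1%:M + u *m b) = 1 + (b *m u) 0 0.
Proof.
have E1 : block_mx 1%:M 0 (-b) 1%:M *m block_mx 1%:M u 0 (1%:M + b *m u)
          = block_mx 1%:M u (-b) 1%:M :> 'M[R]_(m + 1).
  rewrite mulmx_block !mul1mx !mulmx1 ?mul0mx ?mulmx0 ?addr0 ?add0r.
  by rewrite mulNmx addrCA addNr addr0.
have E2 : block_mx (1%:M + u *m b) u 0 1%:M *m block_mx 1%:M 0 (-b) 1%:M
          = block_mx 1%:M u (-b) 1%:M :> 'M[R]_(m + 1).
  rewrite mulmx_block !mul1mx !mulmx1 ?mul0mx ?mulmx0 ?addr0 ?add0r.
  by rewrite mulmxN addrK.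
have := congr1 determinant (etrans E1 (esym E2)).
rewrite !det_mulmx !det_lblock !det_ublock !det1 !mul1r !mulr1 => <-.
by rewrite det_mx11 !mxE eqxx.
Qed.

Lemma det_add_mulmx m (W : 'M[R]_m) (u : 'cV[R]_m) (b : 'rV[R]_m) :
  W \in unitmx -> \det (W + u *m b) = \det W * (1 + (b *m invmx W *m u) 0 0).
Proof.
move=> Wu; have -> : W + u *m b = W *m (1%:M + invmx W *m u *m b).
  by rewrite mulmxDr mulmx1 !mulmxA mulmxV // mul1mx.
by rewrite det_mulmx det_1_add_mulmx !mulmxA.
Qed.

End RankOneUpdate.

Section RowReplacement.
Variables (F : fieldType) (n : nat).

Lemma row_repl_mulmx m (X : 'M[F]_(n, m)) (Y : 'M[F]_(m, n)) j (v : 'rV[F]_m) :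
  row_repl (X *m Y) j (v *m Y) = (X + delta_mx j 0 *m (v - row j X)) *m Y.
Proof.
apply/matrixP => p q; rewrite !mxE.
case: eqP => [->|ne]; rewrite ?mxE; apply: eq_bigr => l _;
  rewrite !mxE big_ord1 !mxE eqxx andbT.
  by rewrite mul1r addrC subrK.
by move/eqP/negbTE: ne => ->; rewrite mul0r addr0.
Qed.

Lemma principal_row_repl_notin (M : 'M[F]_n) j c (S : {set 'I_n}) :
  j \notin S -> principal (row_repl M j c) S = principal M S.
Proof.
move=> jS; apply/matrixP => p q; rewrite !mxE.
by case: eqP => // E; move: (enum_valP p); rewrite E (negbTE jS).
Qed.

Lemma sum_pminors_j_row_repl0 (M : 'M[F]_n) m j :
  sum_pminors_j (row_repl M j 0) m j = 0.
Proof.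
apply: big1 => S /andP[_ jS].
rewrite (expand_det_row _ (enum_rank_in jS j)); apply: big1 => l _.
by rewrite !mxE enum_rankK_in // eqxx mul0r.
Qed.

(* The minors avoiding [j] do not see row [j]. *)
Lemma sum_pminors_j_row_repl (M : 'M[F]_n) m j c :
  sum_pminors_j (row_repl M j c) m j =
  sum_pminors (row_repl M j c) m - sum_pminors (row_repl M j 0) m.
Proof.
have split_j d : sum_pminors (row_repl M j d) m =
    sum_pminors_j (row_repl M j d) m j +
    \sum_(S : {set 'I_n} | (#|S| == m) && (j \notin S)) \det (principal M S).
  rewrite /sum_pminors (bigID (fun S : {set 'I_n} => j \in S)) /=; congr (_ + _).
  by apply: eq_bigr => S /andP[_ jS]; rewrite principal_row_repl_notin.
by rewrite !split_j sum_pminors_j_row_repl0 add0r addrK.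
Qed.

Lemma sum_pminors_j_row_repl_mulmx m (X : 'M[F]_(n, m)) (Y : 'M[F]_(m, n)) j
    (v : 'rV[F]_m) :
  Y *m X \in unitmx ->
  sum_pminors_j (row_repl (X *m Y) j (v *m Y)) m j =
  \det (Y *m X) * (v *m invmx (Y *m X) *m Y) 0 j.
Proof.
move=> Wu; rewrite sum_pminors_j_row_repl -(mul0mx 1 Y) !row_repl_mulmx.
rewrite !sum_pminors_mulmx ![Y *m (X + _)]mulmxDr !mulmxA !det_add_mulmx // -mulrBr.
congr (_ * _); rewrite !mulmxA !mulmxBl !mul0mx -!colE !mxE; ring.
Qed.

End RowReplacement.

Section GroupInverse.
Variables (F : fieldType) (n : nat) (M G : 'M[F]_n).
Hypotheses (MGM : M *m G *m M = M) (GMG : G *m M *m G = G) (MG_GM : M *m G = G *m M).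

Lemma mxrank_sqr_group_inv : \rank (M *m M) = \rank M.
Proof.
apply/eqP; rewrite eqn_leq mxrankM_maxl /=.
by rewrite -{1}MGM -mulmxA -MG_GM mulmxA mxrankM_maxl.
Qed.

Lemma unitmx_row_col_base : row_base M *m col_base M \in unitmx.
Proof.
rewrite -row_free_unit /row_free eqn_leq rank_leq_row /=.
rewrite -[X in (X <= _)%N]mxrank_sqr_group_inv -{1 2}(mulmx_base M).
by rewrite mulmxA -(mulmxA _ _ (col_base M)) (leq_trans (mxrankM_maxl _ _)) ?mxrankM_maxr.
Qed.

Lemma sum_pminors_group_inv :
  sum_pminors M (\rank M) = \det (row_base M *m col_base M).
Proof. by rewrite -sum_pminors_mulmx mulmx_base. Qed.

Lemma sum_pminors_group_inv_neq0 : sum_pminors M (\rank M) != 0.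
Proof. by rewrite sum_pminors_group_inv -unitfE -unitmxE unitmx_row_col_base. Qed.

Lemma sum_pminors_j_row_repl_group_inv j (c : 'rV[F]_n) :
  c *m G *m M = c ->
  sum_pminors_j (row_repl M j c) (\rank M) j = sum_pminors M (\rank M) * (c *m G) 0 j.
Proof.
move=> cGM; have XY := mulmx_base M.
have cGGM : c *m G *m G *m M = c *m G by rewrite -!mulmxA -MG_GM (mulmxA G) GMG.
have cGX : c *m G *m col_base M = c *m G *m G *m col_base M *m row_base M *m col_base M.
  by rewrite -(mulmxA _ (col_base M)) XY cGGM.
have := sum_pminors_j_row_repl_mulmx j (c *m G *m col_base M) unitmx_row_col_base.
rewrite -mulmxA XY cGM => ->; rewrite sum_pminors_group_inv cGX.
by rewrite -(mulmxA _ (row_base M)) mulmxK ?unitmx_row_col_base // -mulmxA XY cGGM.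
Qed.

End GroupInverse.

Section DrazinPowers.
Variables (R : pzRingType) (a x : R) (k : nat).
Hypotheses (ax_xa : GRing.comm a x) (xax : x * a * x = x) (akx : a ^+ k.+1 * x = a ^+ k).

Lemma drazin_expX m : x ^+ m.+1 * a ^+ m = x.
Proof.
elim: m => [|m IHm]; first by rewrite expr1 expr0 mulr1.
by rewrite exprS (exprSr a) !mulrA -(mulrA x (x ^+ m.+1)) IHm -mulrA -ax_xa mulrA xax.
Qed.

Lemma drazin_exp_mulX l : a ^+ (k + l) * x ^+ k.+1 = a ^+ l * x.
Proof.
have comm_ak_x : GRing.comm (a ^+ k) (x ^+ k.+1) by apply/commrX/commr_sym/commrX.
by rewrite addnC exprD -mulrA comm_ak_x drazin_expX.
Qed.

Lemma drazin_exp_proj l : a ^+ (k + l) * x ^+ k.+1 * a ^+ k.+1 = a ^+ (k + l).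
Proof.
have x_ak : x * a ^+ k.+1 = a ^+ k by rewrite (commrX k.+1 (commr_sym ax_xa)).
by rewrite drazin_exp_mulX -mulrA x_ak -exprD addnC.
Qed.

Lemma drazin_group_inv_exp :
  [/\ a ^+ k.+1 * x ^+ k.+1 * a ^+ k.+1 = a ^+ k.+1,
      x ^+ k.+1 * a ^+ k.+1 * x ^+ k.+1 = x ^+ k.+1
    & GRing.comm (a ^+ k.+1) (x ^+ k.+1)].
Proof.
split; first by have := drazin_exp_proj 1; rewrite addn1.
  by rewrite (exprSr a) mulrA drazin_expX exprS mulrA xax.
by apply/commrX/commr_sym/commrX.
Qed.

End DrazinPowers.

Section DrazinMinors.
Variables (F : fieldType) (n : nat) (A AD : 'M[F]_n) (k : nat).
Hypotheses (A_AD : A *m AD = AD *m A) (AD_A_AD : AD *m A *m AD = AD)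
  (Ak_AD : A ^+ k.+1 *m AD = A ^+ k).

Lemma sum_pminors_drazin_neq0 : sum_pminors (A ^+ k.+1) (\rank (A ^+ k.+1)) != 0.
Proof.
have [MGM GMG MG_GM] := drazin_group_inv_exp A_AD AD_A_AD Ak_AD.
exact: (sum_pminors_group_inv_neq0 (M := A ^+ k.+1) (G := AD ^+ k.+1)).
Qed.

Lemma sum_pminors_j_drazin (B : 'M[F]_n) i j l :
  sum_pminors_j (row_repl (A ^+ k.+1) j (row i (B *m A ^+ (k + l))))
    (\rank (A ^+ k.+1)) j =
  sum_pminors (A ^+ k.+1) (\rank (A ^+ k.+1)) * (B *m A ^+ l *m AD) i j.
Proof.
have [MGM GMG MG_GM] := drazin_group_inv_exp A_AD AD_A_AD Ak_AD.
have proj : A ^+ (k + l) *m AD ^+ k.+1 *m A ^+ k.+1 = A ^+ (k + l) :=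
  drazin_exp_proj A_AD AD_A_AD Ak_AD l.
have expX : A ^+ (k + l) *m AD ^+ k.+1 = A ^+ l *m AD :=
  drazin_exp_mulX k A_AD AD_A_AD l.
rewrite (sum_pminors_j_row_repl_group_inv (G := AD ^+ k.+1)) //; last first.
  by rewrite -!row_mul -!mulmxA (mulmxA (A ^+ (k + l))) proj.
by rewrite -row_mul -mulmxA expX mulmxA mxE.
Qed.

End DrazinMinors.

Lemma is_index_uniq (F : fieldType) n (A : 'M[F]_n) k k' :
  is_index A k -> is_index A k' -> k = k'.
Proof.
move=> [rk Ak] [rk' Ak']; case: (ltngtP k k') => // lt_kk'.
  by case: (Ak' _ lt_kk' rk).
by case: (Ak _ lt_kk' rk').
Qed.

Local Open Scope complex_scope.

Theorem theorem5p3 (R : realType) (n : nat) (A B AD : 'M[R[i]]_n) (k : nat)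
    (t : R) :
  is_index A k -> is_drazin A AD ->
  let r := \rank (A ^+ k) in
  let Delta := sum_pminors (A ^+ k.+1) r in
  let N := fun (i j : 'I_n) (l : nat) =>
    sum_pminors_j (row_repl (A ^+ k.+1) j (row i (B *m A ^+ l))) r j in
  let X := B *m AD +
    \sum_(1 <= s < k.+1)
      (((-1) ^+ s.-1 / (s`!)%:R * (t%:C) ^+ s)
        *: (B *m A ^+ s.-1 - B *m A ^+ s *m AD)) in
  forall i j : 'I_n,
    X i j = N i j k / Delta +
      \sum_(1 <= s < k.+1)
        ((-1) ^+ s.-1 / (s`!)%:R *
          ((B *m A ^+ s.-1) i j - N i j (k + s)%N / Delta) * (t%:C) ^+ s).
Proof.
move=> Ak [k' [Ak' [Ak_AD [AD_A_AD A_AD]]]] r Delta N X i j.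
have ek := is_index_uniq Ak' Ak; subst k'.
have rk : \rank (A ^+ k.+1) = r := Ak.1.
have Delta_neq0 : Delta != 0.
  by rewrite /Delta -rk (sum_pminors_drazin_neq0 A_AD AD_A_AD Ak_AD).
have N_Delta l : N i j (k + l)%N / Delta = (B *m A ^+ l *m AD) i j.
  by rewrite /N -rk (sum_pminors_j_drazin A_AD AD_A_AD Ak_AD) rk -/Delta mulrC mulKf.
have N0_Delta : N i j k / Delta = (B *m AD) i j.
  by rewrite -[k in N i j k]addn0 N_Delta expr0 mulmx1.
rewrite N0_Delta /X mxE summxE; congr (_ + _).
by apply: eq_bigr => s _; rewrite N_Delta !mxE; ring.
Qed.
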